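(* Let $a,b$ be coprime integers with $0<a\le b$ and let $a/b=[0,u_1,\dots,u_n]$ be a simple continued fraction expansion of even depth $n=2i$ ($i\ge 1$), with convergents $p_k/q_k$. Let $D$ be the standard line $\{(x,y)\in\mathbb{Z}^2: 0\le ax-by<a+b\}$, let $U_1=(0,0)$ and $U_2=(b,a)$, let $L_1$ be the lower leaning point of $D$ with $0<x\le b$, and $L_2=L_1+(b,a)$. Then \[ \overrightarrow{U_1L_1}=(q_{2i-1}+1,\;p_{2i-1}-1),\qquad \overrightarrow{L_1U_2}=(u_{2i}-1)(q_{2i-1},p_{2i-1})+(q_{2i-2},p_{2i-2})+(-1,1). \] Moreover, the Freeman word of the DSS $[U_1L_1]$ has $E(z_{2i-2})^{u_{2i-1}}$ as a left factor (prefix), and the Freeman word of the DSS $[L_1U_2]$ has $E(z_{2i-1})^{u_{2i}-1}$ as a right factor (suffix).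
   Context: A standard line $\{\mu\le ax-by<\mu+|a|+|b|\}$ is a 4-connected path of lattice points; points with $ax-by=\mu$ are upper leaning points, those with $ax-by=\mu+|a|+|b|-1$ lower leaning points. For $P,Q\in D$, $[PQ]$ denotes the path of points of $D$ from $P$ to $Q$; its Freeman word records its unit moves, $0$ for $(1,0)$ and $1$ for $(0,1)$. For $a/b=[0,u_1,\dots,u_n]$, $z_k=p_k/q_k=[0,u_1,\dots,u_k]$ with $(p_0,q_0)=(0,1)$, $(p_{-1},q_{-1})=(1,0)$ and $(p_k,q_k)=u_k(p_{k-1},q_{k-1})+(p_{k-2},q_{k-2})$. Words: $E(z_0)=0$, $E(z_1)=0^{u_1}1$, $E(z_{2j+1})=E(z_{2j})^{u_{2j+1}}E(z_{2j-1})$, $E(z_{2j})=E(z_{2j-2})E(z_{2j-1})^{u_{2j}}$. *)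

From mathcomp Require Import all_boot all_order all_algebra.
Set Implicit Arguments. Unset Strict Implicit. Unset Printing Implicit Defensive.
Import Order.TTheory GRing.Theory Num.Theory.
Local Open Scope ring_scope.

Definition cfrac (u : nat -> nat) (n : nat) : rat :=
  foldr (fun (k : nat) (acc : rat) => ((u k)%:R + acc)^-1) 0 (iota 1 n).

(** (p_{k-1}, q_{k-1}), (p_k, q_k) with (p_{-1},q_{-1}) = (1,0),
    (p_0,q_0) = (0,1), (p_k,q_k) = u_k (p_{k-1},q_{k-1}) + (p_{k-2},q_{k-2}). *)
Fixpoint conv2 (u : nat -> nat) (k : nat) : (nat * nat) * (nat * nat) :=
  match k with
  | 0 => ((1, 0), (0, 1))
  | k'.+1 =>
      let: (pr, cu) := conv2 u k' in
      (cu, (u k * cu.1 + pr.1, u k * cu.2 + pr.2))%N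
  end.

Definition p_ (u : nat -> nat) (k : nat) : int := (conv2 u k).2.1.
Definition q_ (u : nat -> nat) (k : nat) : int := (conv2 u k).2.2.

Definition wpow (w : seq nat) (m : nat) : seq nat := flatten (nseq m w).

(** (E(z_{k-1}), E(z_k)); at k = 0 the first component is the auxiliary
    word [1], chosen so that the uniform recursion gives E(z_1) = 0^{u_1} 1.
    E(z_0) = 0, E(z_{2j+1}) = E(z_{2j})^{u_{2j+1}} E(z_{2j-1}),
    E(z_{2j}) = E(z_{2j-2}) E(z_{2j-1})^{u_{2j}}. *)
Fixpoint Ew2 (u : nat -> nat) (k : nat) : seq nat * seq nat :=
  match k with
  | 0 => ([:: 1%N], [:: 0%N])
  | k'.+1 =>
      let: (prev, cur) := Ew2 u k' in
      (cur, if odd k then wpow cur (u k) ++ prev else prev ++ wpow cur (u k))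
  end.

Definition E_ (u : nat -> nat) (k : nat) : seq nat := (Ew2 u k).2.

Definition inD (a b : nat) (P : int * int) : bool :=
  (0 <= a%:Z * P.1 - b%:Z * P.2) && (a%:Z * P.1 - b%:Z * P.2 < a%:Z + b%:Z).

Definition lower_leaning (a b : nat) (P : int * int) : Prop :=
  a%:Z * P.1 - b%:Z * P.2 = a%:Z + b%:Z - 1.

(** Freeman word (0 for (1,0), 1 for (0,1)) of the 4-connected path of points
    of D starting at P, of m steps: from a point of D, the next point is the
    neighbour (x+1,y) if it lies in D, otherwise (x,y+1). *)
Fixpoint fword (a b : nat) (P : int * int) (m : nat) : seq nat :=
  match m with
  | 0 => [::]
  | m'.+1 =>
      if inD a b (P.1 + 1, P.2) then 0%N :: fword a b (P.1 + 1, P.2) m'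
      else 1%N :: fword a b (P.1, P.2 + 1) m'
  end.

Definition freeman (a b : nat) (P Q : int * int) : seq nat :=
  fword a b P (absz ((Q.1 - P.1) + (Q.2 - P.2))%R).

From mathcomp Require Import all_boot all_order all_algebra.
From mathcomp Require Import zify ring.
Set Implicit Arguments. Unset Strict Implicit. Unset Printing Implicit Defensive.
Import Order.TTheory GRing.Theory Num.Theory.
Local Open Scope ring_scope.

(* Identify a point of D with its remainder r = a x - b y in [0, a + b): a step 0
   adds a, a step 1 subtracts b, and the step is 0 exactly when r < b.  The word
   E(z_k) has q_k zeros and p_k ones, so it shifts the remainder by
   delta_k = a q_k - b p_k.  At the last level delta_n = 0 and delta_{n-1} = -1,
   and the recurrence delta_{k+2} = u_{k+2} delta_{k+1} + delta_k then forces the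
   delta_k to alternate in sign.  By induction on j, E(z_{2j}) is read from every
   remainder in [0, u_{2j+1} delta_{2j} - delta_{2j+1}) and E(z_{2j+1}) from every
   remainder in [-delta_{2j+1}, delta_{2j} - delta_{2j+1}).  Since delta_{n-1} = -1
   and delta_{n-2} = u_n, coprimality pins L_1 down to (q_{n-1} + 1, p_{n-1} - 1),
   the power E(z_{n-2})^{u_{n-1}} is read from U_1 (remainder 0), and after the
   first |E(z_{n-2})| steps from L_1 (remainder a + b - 1) the remainder is u_n - 1,
   from which E(z_{n-1})^{u_n - 1} is read. *)

Lemma wpowS (w : seq nat) m : wpow w m.+1 = w ++ wpow w m.
Proof. by []. Qed.

Lemma size_wpow (w : seq nat) m : size (wpow w m) = (m * size w)%N.
Proof. by elim: m => [//|m IH]; rewrite wpowS size_cat IH mulSn. Qed.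

Section Convergents.
Variable u : nat -> nat.

Lemma conv2_fst k : (conv2 u k.+1).1 = (conv2 u k).2.
Proof. by rewrite /=; case: (conv2 u k). Qed.

Lemma conv2_snd k : (conv2 u k.+1).2 =
  (u k.+1 * (conv2 u k).2.1 + (conv2 u k).1.1,
   u k.+1 * (conv2 u k).2.2 + (conv2 u k).1.2)%N.
Proof. by rewrite /=; case: (conv2 u k) => [[? ?] [? ?]]. Qed.

Lemma p_0 : p_ u 0 = 0. Proof. by []. Qed.
Lemma q_0 : q_ u 0 = 1. Proof. by []. Qed.
Lemma p_1 : p_ u 1 = 1. Proof. by rewrite /p_ /= muln0. Qed.
Lemma q_1 : q_ u 1 = (u 1)%:Z. Proof. by rewrite /q_ /= muln1 addn0. Qed.

Lemma p_SS k : p_ u k.+2 = (u k.+2)%:Z * p_ u k.+1 + p_ u k.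
Proof. by rewrite /p_ conv2_snd conv2_fst PoszD PoszM. Qed.

Lemma q_SS k : q_ u k.+2 = (u k.+2)%:Z * q_ u k.+1 + q_ u k.
Proof. by rewrite /q_ conv2_snd conv2_fst PoszD PoszM. Qed.

Lemma convergent_det k :
  p_ u k * q_ u k.+1 - p_ u k.+1 * q_ u k = (-1) ^+ k.+1.
Proof.
elim: k => [|k IH]; first by rewrite p_0 q_0 p_1 q_1; ring.
by rewrite p_SS q_SS exprS -IH; ring.
Qed.

Lemma coprime_convergent k : coprimez (p_ u k.+1) (q_ u k.+1).
Proof.
have := convergent_det k; rewrite -signr_odd.
case: (odd k.+1) => det; rewrite ?expr1 ?expr0 in det; apply/coprimezP.
  by exists (q_ u k, - p_ u k) => /=; rewrite -[1]opprK -det; ring.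
by exists (- q_ u k, p_ u k) => /=; rewrite -det; ring.
Qed.

Lemma q_ge0 k : 0 <= q_ u k. Proof. by []. Qed.

Lemma q_le_S k : (0 < u k.+1)%N -> q_ u k <= q_ u k.+1.
Proof.
case: k => [|k] hu; first by rewrite q_0 q_1 lez_nat.
have := q_ge0 k; have := q_ge0 k.+1; rewrite q_SS; nia.
Qed.

Lemma q_gt0 k : (forall j, (1 <= j <= k)%N -> (0 < u j)%N) -> 0 < q_ u k.
Proof.
elim: k => [//|k IH] hu.
have hu' j : (1 <= j <= k)%N -> (0 < u j)%N.
  by case/andP=> j1 jk; apply: hu; rewrite j1 leqW.
exact: lt_le_trans (IH hu') (q_le_S (hu k.+1 (leqnn _))).
Qed.

Lemma foldr_cfrac k (t : rat) : (forall j, (1 <= j <= k.+1)%N -> (0 < u j)%N) ->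
  0 <= t ->
  foldr (fun j acc => ((u j)%:R + acc)^-1) t (iota 1 k.+1) =
  ((p_ u k)%:~R * t + (p_ u k.+1)%:~R) / ((q_ u k)%:~R * t + (q_ u k.+1)%:~R).
Proof.
elim: k t => [|k IH] t hu t0.
  by rewrite p_0 q_0 p_1 q_1 -!pmulrn /= mul0r add0r !mul1r addrC.
have -> : iota 1 k.+2 = iota 1 k.+1 ++ [:: k.+2] by rewrite -[in LHS](addn1 k.+1) iotaD.
have hu' j : (1 <= j <= k.+1)%N -> (0 < u j)%N.
  by case/andP=> j1 jk; apply: hu; rewrite j1 leqW.
have hU : 0 < (u k.+2)%:R + t :> rat.
  by apply: ltr_wpDr => //; rewrite ltr0n hu // leqnn.
rewrite foldr_cat IH // ?invr_ge0 ?ltW // p_SS q_SS !intrD !intrM.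
have q0 : 0 <= (q_ u k)%:~R :> rat by rewrite ler0z.
have q1 : 0 < (q_ u k.+1)%:~R :> rat by rewrite ltr0z q_gt0.
move: q0 q1 hU; set P0 := (p_ u k)%:~R : rat; set P1 := (p_ u k.+1)%:~R : rat.
set Q0 := (q_ u k)%:~R : rat; set Q1 := (q_ u k.+1)%:~R : rat.
rewrite -pmulrn /=; set U := (u k.+2)%:R : rat => q0 q1 hU.
have hD : 0 < Q1 * (U + t) + Q0 by rewrite ltr_wpDr // mulr_gt0.
clearbody P0 P1 Q0 Q1 U; field.
have -> : Q1 * t + (U * Q1 + Q0) = Q1 * (U + t) + Q0 by ring.
by rewrite !gt_eqF.
Qed.

Lemma cfrac_convergent k : (forall j, (1 <= j <= k.+1)%N -> (0 < u j)%N) ->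
  cfrac u k.+1 = (p_ u k.+1)%:~R / (q_ u k.+1)%:~R.
Proof. by move=> hu; rewrite /cfrac foldr_cfrac // !mulr0 !add0r. Qed.

Lemma convergent_eq_frac (a b : nat) k : coprime a b -> (0 < b)%N ->
  (forall j, (1 <= j <= k.+1)%N -> (0 < u j)%N) ->
  a%:Q / b%:Q = cfrac u k.+1 -> p_ u k.+1 = a /\ q_ u k.+1 = b.
Proof.
move=> cab b0 hu; rewrite cfrac_convergent // => E.
have q0 := q_gt0 hu.
have := congr1 numq E; have := congr1 denq E.
have b0' : 0 < b%:Z by rewrite ltz_nat.
have cpq : coprime `|p_ u k.+1| `|q_ u k.+1| := coprime_convergent k.
rewrite !coprimeq_num ?coprimeq_den //.
by rewrite !gtr0_sg // !mul1r !gt_eqF // !gtr0_norm // => -> ->.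
Qed.

Lemma Ew2_fst k : (Ew2 u k.+1).1 = E_ u k.
Proof. by rewrite /E_ /=; case: (Ew2 u k). Qed.

Lemma Ew2_snd k : (Ew2 u k.+1).2 = if odd k.+1
  then wpow (Ew2 u k).2 (u k.+1) ++ (Ew2 u k).1
  else (Ew2 u k).1 ++ wpow (Ew2 u k).2 (u k.+1).
Proof. by rewrite /=; case: (Ew2 u k). Qed.

Lemma E_0 : E_ u 0 = [:: 0%N]. Proof. by []. Qed.
Lemma E_1 : E_ u 1 = wpow [:: 0%N] (u 1) ++ [:: 1%N]. Proof. by []. Qed.

Lemma E_SS k : E_ u k.+2 = if odd k
  then wpow (E_ u k.+1) (u k.+2) ++ E_ u k
  else E_ u k ++ wpow (E_ u k.+1) (u k.+2).
Proof. by rewrite {1}/E_ Ew2_snd Ew2_fst /= negbK. Qed.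

Lemma size_E k : (size (E_ u k))%:Z = p_ u k + q_ u k.
Proof.
suff: (size (E_ u k))%:Z = p_ u k + q_ u k /\
      (size (E_ u k.+1))%:Z = p_ u k.+1 + q_ u k.+1 by case.
elim: k => [|k [IH IH1]]; first by rewrite E_1 p_1 q_1 size_cat size_wpow muln1 addn1.
split=> //; rewrite E_SS p_SS q_SS; case: odd;
  rewrite size_cat size_wpow PoszD PoszM IH IH1; ring.
Qed.

Lemma size_wpow_E_le k : (u k.+1 * size (E_ u k) <= size (E_ u k.+1))%N.
Proof.
case: k => [|k]; first by rewrite E_1 size_cat size_wpow leq_addr.
by rewrite E_SS; case: odd; rewrite size_cat size_wpow ?leq_addr ?leq_addl.
Qed.
End Convergents.

Section Reading.
Variables a b : nat.

(* The path of D from a point depends only on its remainder r = a x - b y;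
   [read r m] is the Freeman word of its first m steps. *)
Fixpoint read (r : int) (m : nat) : seq nat :=
  match m with
  | 0 => [::]
  | m'.+1 => if (0 <= r + a%:Z) && (r + a%:Z < a%:Z + b%:Z)
             then 0%N :: read (r + a%:Z) m' else 1%N :: read (r - b%:Z) m'
  end.

Lemma fword_read P m : fword a b P m = read (a%:Z * P.1 - b%:Z * P.2) m.
Proof.
elim: m P => [//|m IH] [x y] /=.
rewrite /inD /= !IH /=.
have -> : a%:Z * (x + 1) - b%:Z * y = a%:Z * x - b%:Z * y + a%:Z by ring.
by have -> : a%:Z * x - b%:Z * (y + 1) = a%:Z * x - b%:Z * y - b%:Z by ring.
Qed.

Definition wshift (w : seq nat) : int :=
  \sum_(c <- w) (if c == 0%N then a%:Z else - b%:Z).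

Lemma wshift_cat w1 w2 : wshift (w1 ++ w2) = wshift w1 + wshift w2.
Proof. exact: big_cat. Qed.

Lemma wshift_0 : wshift [:: 0%N] = a%:Z. Proof. exact: big_seq1. Qed.
Lemma wshift_1 : wshift [:: 1%N] = - b%:Z. Proof. exact: big_seq1. Qed.

Lemma wshift_wpow w m : wshift (wpow w m) = m%:Z * wshift w.
Proof.
elim: m => [|m IH]; first by rewrite mul0r /wshift big_nil.
by rewrite wpowS wshift_cat IH -add1n PoszD mulrDl mul1r.
Qed.

Lemma read_cat r m1 m2 :
  read r (m1 + m2) = read r m1 ++ read (r + wshift (read r m1)) m2.
Proof.
elim: m1 r => [|m1 IH] r /=; first by rewrite /wshift big_nil addr0.
by case: ifP => _; rewrite IH /wshift big_cons /= addrA.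
Qed.

Lemma read_mod r m : 0 <= r < a%:Z + b%:Z ->
  r + wshift (read r m) = ((r + a%:Z * m%:Z) %% (a%:Z + b%:Z))%Z.
Proof.
elim: m r => [|m IH] r hr /=.
  by rewrite /wshift big_nil !mulr0 !addr0 modz_small.
rewrite -[m.+1]addn1 PoszD.
case: ifP => [/andP[r1 r2] | /negbT hr'];
  rewrite /wshift big_cons /= -/(wshift _) addrA IH ?r1 ?r2 //.
- by congr (_ %% _)%Z; ring.
- have -> : r + a%:Z * (m%:Z + 1) = r - b%:Z + a%:Z * m%:Z + (a%:Z + b%:Z) by ring.
  by rewrite modzDr.
- move: hr'; rewrite negb_and -!ltNge; lia.
Qed.

Lemma prefix_read r m1 m2 : (m1 <= m2)%N -> prefix (read r m1) (read r m2).
Proof. by move/subnKC <-; rewrite read_cat prefix_prefix. Qed.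

Lemma suffix_read r m1 m2 :
  suffix (read (r + wshift (read r m1)) m2) (read r (m1 + m2)).
Proof. by rewrite read_cat suffix_suffix. Qed.

Definition readable (w : seq nat) (r : int) := read r (size w) = w.

Definition readable_on (w : seq nat) (lo hi : int) :=
  forall s, lo <= s < hi -> readable w s.

Lemma readable_cat w1 w2 r :
  readable w1 r -> readable w2 (r + wshift w1) -> readable (w1 ++ w2) r.
Proof. by rewrite /readable size_cat read_cat => -> ->. Qed.

Lemma readable_wpow w m r :
  (forall t, (t < m)%N -> readable w (r + t%:Z * wshift w)) ->
  readable (wpow w m) r.
Proof.
elim: m r => [//|m IH] r hw; rewrite wpowS; apply: readable_cat.
  by have := hw 0%N isT; rewrite mul0r addr0.
apply: IH => t ht; have := hw t.+1 ht.
by rewrite -addrA -add1n PoszD mulrDl mul1r.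
Qed.

Lemma readable_on_sub w lo hi lo' hi' :
  lo <= lo' -> hi' <= hi -> readable_on w lo hi -> readable_on w lo' hi'.
Proof.
move=> hlo hhi hw s /andP[s1 s2].
by apply: hw; rewrite (le_trans hlo) ?(lt_le_trans s2).
Qed.

Lemma readable_on_0 : readable_on [:: 0%N] 0 b%:Z.
Proof. by move=> s /andP[s1 s2]; rewrite /readable /=; case: ifP => //; lia. Qed.

Lemma readable_on_1 : readable_on [:: 1%N] b%:Z (a%:Z + b%:Z).
Proof. by move=> s /andP[s1 s2]; rewrite /readable /=; case: ifP => //; lia. Qed.

Lemma readable_on_step E0 E1 v w (x y x' y' : int) :
  x' = x - v%:Z * y -> y' = y - w%:Z * x' -> 0 <= x' -> 0 <= y' ->
  wshift E0 = x -> wshift E1 = - y ->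
  readable_on E0 0 y -> readable_on E1 y (y + x) ->
  readable_on (E0 ++ wpow E1 v) 0 (w%:Z * x' + y') /\
  readable_on (wpow (E0 ++ wpow E1 v) w ++ E1) y' (y' + x').
Proof.
move=> ex' ey' x'0 y'0 hE0 hE1 R0 R1.
have y0 : 0 <= y by nia.
have hE : wshift (E0 ++ wpow E1 v) = x'.
  by rewrite wshift_cat wshift_wpow hE0 hE1 ex'; ring.
have R : readable_on (E0 ++ wpow E1 v) 0 y.
  move=> s /andP[s0 s1]; apply: readable_cat; first by apply: R0; rewrite s0 s1.
  by apply: readable_wpow => t ht; rewrite hE0 hE1; apply: R1; apply/andP; nia.
have -> : w%:Z * x' + y' = y by rewrite ey'; ring.
split=> // s /andP[s0 s1]; apply: readable_cat.
  by apply: readable_wpow => t ht; rewrite hE; apply: R; apply/andP; nia.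
by rewrite wshift_wpow hE; apply: R1; apply/andP; nia.
Qed.

End Reading.

Lemma alternating_nonneg_down (d : nat -> int) (c : nat -> nat) n :
  (forall k, d k.+2 = (c k.+2)%:Z * d k.+1 + d k) ->
  0 <= (-1) ^+ n * d n -> 0 <= (-1) ^+ n.+1 * d n.+1 ->
  forall k, (k <= n.+1)%N -> 0 <= (-1) ^+ k * d k.
Proof.
move=> rec hn hn1.
suff H : forall m, (m <= n)%N ->
  0 <= (-1) ^+ (n - m)%N * d (n - m)%N /\ 0 <= (-1) ^+ (n - m).+1 * d (n - m).+1.
  move=> k; rewrite leq_eqVlt ltnS => /orP[/eqP-> // | hk].
  by have := H _ (leq_subr k n); rewrite subKn // => -[].
elim=> [|m IH] hm; first by rewrite subn0.
have [h1 h2] := IH (ltnW hm).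
have e : (n - m = (n - m.+1).+1)%N by lia.
rewrite e in h1 h2 *; set k := (n - m.+1)%N in h1 h2 *; split=> //.
have -> : (-1) ^+ k * d k =
  (-1) ^+ k.+2 * d k.+2 + (c k.+2)%:Z * ((-1) ^+ k.+1 * d k.+1).
  by rewrite rec !exprS; ring.
by rewrite addr_ge0 // mulr_ge0.
Qed.

Section ChristoffelWords.
Variables (a b : nat) (u : nat -> nat).

Definition delta k : int := a%:Z * q_ u k - b%:Z * p_ u k.

Lemma delta_SS k : delta k.+2 = (u k.+2)%:Z * delta k.+1 + delta k.
Proof. by rewrite /delta p_SS q_SS; ring. Qed.

Lemma wshift_E k : wshift a b (E_ u k) = delta k.
Proof.
suff: wshift a b (E_ u k) = delta k /\ wshift a b (E_ u k.+1) = delta k.+1 by case.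
rewrite /delta; elim: k => [|k [IH IH1]].
  rewrite E_0 E_1 p_0 q_0 p_1 q_1 wshift_cat wshift_wpow wshift_0 wshift_1.
  by split; ring.
split=> //; rewrite E_SS p_SS q_SS; case: odd;
  rewrite wshift_cat wshift_wpow IH IH1; ring.
Qed.

Lemma readable_on_E01 : 0 <= - delta 1 ->
  readable_on a b (E_ u 0) 0 ((u 1)%:Z * delta 0 - delta 1) /\
  readable_on a b (E_ u 1) (- delta 1) (- delta 1 + delta 0).
Proof.
rewrite E_0 E_1 /delta p_0 q_0 p_1 q_1 => d1; split.
  by apply: readable_on_sub (@readable_on_0 a b) => //; lia.
move=> s /andP[s0 s1]; apply: readable_cat.
  apply: readable_wpow => t ht; rewrite wshift_0.
  by apply: (@readable_on_0 a b); apply/andP; nia.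
rewrite wshift_wpow wshift_0.
by apply: (@readable_on_1 a b); apply/andP; nia.
Qed.

Lemma readable_on_E n : (forall k, (k <= n)%N -> 0 <= (-1) ^+ k * delta k) ->
  forall j, (j.*2.+1 <= n)%N ->
  readable_on a b (E_ u j.*2) 0 ((u j.*2.+1)%:Z * delta j.*2 - delta j.*2.+1) /\
  readable_on a b (E_ u j.*2.+1) (- delta j.*2.+1) (- delta j.*2.+1 + delta j.*2).
Proof.
move=> hs.
have ev j : (j.*2 <= n)%N -> 0 <= delta j.*2.
  by move/hs; rewrite -signr_odd odd_double mul1r.
have od j : (j.*2.+1 <= n)%N -> 0 <= - delta j.*2.+1.
  by move/hs; rewrite -signr_odd /= odd_double mulN1r.
elim=> [|j IH] hj; first by apply: readable_on_E01; apply: (od 0%N).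
have hj' : (j.*2.+1 <= n)%N by rewrite doubleS in hj; lia.
have [R0 R1] := IH hj'.
have E2 : E_ u j.*2.+2 = E_ u j.*2 ++ wpow (E_ u j.*2.+1) (u j.*2.+2).
  by rewrite E_SS odd_double.
have E3 : E_ u j.*2.+3 = wpow (E_ u j.*2.+2) (u j.*2.+3) ++ E_ u j.*2.+1.
  by rewrite E_SS /= odd_double.
rewrite doubleS E3 E2.
apply: (@readable_on_step a b _ _ _ _ (delta j.*2) (- delta j.*2.+1)).
- by rewrite delta_SS; ring.
- by rewrite [delta j.*2.+3]delta_SS; ring.
- by have := ev j.+1; rewrite doubleS; apply; lia.
- by have := od j.+1; rewrite doubleS; apply.
- exact: wshift_E.
- by rewrite wshift_E opprK.
- apply: readable_on_sub R0 => //; rewrite lerDr mulr_ge0 // ev //; lia.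
- exact: R1.
Qed.

End ChristoffelWords.

Lemma line_point_eq (a b : nat) (P Q : int * int) : coprime a b ->
  a%:Z * P.1 - b%:Z * P.2 = a%:Z * Q.1 - b%:Z * Q.2 ->
  0 < P.1 <= b%:Z -> 0 < Q.1 <= b%:Z -> P = Q.
Proof.
case: P Q => [x y] [x' y'] /= cab e /andP[x0 xb] /andP[x'0 x'b].
have b0 : 0 < b%:Z by apply: lt_le_trans xb.
have : (b%:Z %| a%:Z * (x - x'))%Z by apply/dvdzP; exists (y - y'); nia.
rewrite Gauss_dvdzr; last by rewrite coprimezE coprime_sym.
case/dvdzP=> k hk; have ex : x = x' by case: (ltrgtP k 0) => hk0; nia.
by rewrite ex in e *; congr pair; nia.
Qed.

Section LastLevel.
Variables (a b : nat) (u : nat -> nat) (j : nat).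
Local Notation k := j.*2.
Hypotheses (pa : p_ u k.+2 = a) (qb : q_ u k.+2 = b).

Lemma delta_penult : delta a b u k.+1 = -1.
Proof.
have := convergent_det u k.+1.
by rewrite -signr_odd /= odd_double /= expr0 /delta -pa -qb; lia.
Qed.

Lemma delta_last : delta a b u k.+2 = 0.
Proof. by rewrite /delta pa qb; ring. Qed.

Lemma delta_antepenult : delta a b u k = (u k.+2)%:Z.
Proof. by have := delta_SS a b u k; rewrite delta_last delta_penult; lia. Qed.

Lemma readable_on_last_E :
  readable_on a b (E_ u k) 0 ((u k.+1)%:Z * (u k.+2)%:Z + 1) /\
  readable_on a b (E_ u k.+1) 1 (1 + (u k.+2)%:Z).
Proof.
have hs : forall m, (m <= k.+2)%N -> 0 <= (-1) ^+ m * delta a b u m.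
  apply: (alternating_nonneg_down (delta_SS a b u)).
    by rewrite delta_penult -signr_odd /= odd_double.
  by rewrite delta_last mulr0.
have := readable_on_E hs (leqnSn k.+1).
by rewrite delta_antepenult delta_penult opprK.
Qed.

Hypothesis hu : forall l, (1 <= l <= k.+2)%N -> (0 < u l)%N.

Lemma u_last_gt0 : (0 < u k.+2)%N.
Proof. by apply: hu; rewrite leqnn. Qed.

Lemma q_antepenult_gt0 : 0 < q_ u k.
Proof. by apply: q_gt0 => l hl; apply: hu; lia. Qed.

Lemma q_penult_gt0 : 0 < q_ u k.+1.
Proof. by apply: q_gt0 => l hl; apply: hu; lia. Qed.

Lemma q_penult_lt : q_ u k.+1 < b%:Z.
Proof.
have := q_antepenult_gt0; have := q_penult_gt0.
have : 1 <= (u k.+2)%:Z by rewrite lez_nat u_last_gt0.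
by rewrite -qb q_SS; nia.
Qed.

Lemma lower_leaning_eq (L : int * int) : coprime a b ->
  lower_leaning a b L -> 0 < L.1 <= b%:Z -> L = (q_ u k.+1 + 1, p_ u k.+1 - 1).
Proof.
move=> cab hL hX; have q0 := q_penult_gt0; have qlt := q_penult_lt.
apply: line_point_eq cab _ hX _ => /=; last lia.
by rewrite hL; move: delta_penult; rewrite /delta; lia.
Qed.

Lemma prefix_freeman_lower_leaning :
  prefix (wpow (E_ u k) (u k.+1)) (freeman a b (0, 0) (q_ u k.+1 + 1, p_ u k.+1 - 1)).
Proof.
rewrite /freeman fword_read /= !mulr0 subr0.
set m := `|_|%N; have -> : m = size (E_ u k.+1).
  by have sE := size_E u k.+1; apply/eqP; rewrite -eqz_nat /m gez0_abs; lia.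
have Rw : readable a b (wpow (E_ u k) (u k.+1)) 0.
  apply: readable_wpow => t ht; rewrite wshift_E delta_antepenult add0r.
  by case: readable_on_last_E => R0 _; apply: R0; apply/andP; nia.
by rewrite -Rw; apply: prefix_read; rewrite size_wpow size_wpow_E_le.
Qed.

Lemma suffix_freeman_lower_leaning :
  suffix (wpow (E_ u k.+1) (u k.+2 - 1))
    (freeman a b (q_ u k.+1 + 1, p_ u k.+1 - 1) (b%:Z, a%:Z)).
Proof.
have hL : a%:Z * (q_ u k.+1 + 1) - b%:Z * (p_ u k.+1 - 1) = a%:Z + b%:Z - 1.
  by move: delta_penult; rewrite /delta; lia.
rewrite /freeman fword_read /= hL.
have sE0 := size_E u k; have sE1 := size_E u k.+1; have u0 := u_last_gt0.
set m := `|_|%N; have -> : m = (size (E_ u k) + (u k.+2 - 1) * size (E_ u k.+1))%N.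
  by apply/eqP; rewrite -eqz_nat /m gez0_abs -pa -qb p_SS q_SS; nia.
have ub : (u k.+2)%:Z <= a%:Z + b%:Z.
  by have := q_penult_gt0; have := q_antepenult_gt0; rewrite -qb q_SS; nia.
(* The remainder reached is determined modulo a + b by the number of steps. *)
have e : a%:Z + b%:Z - 1 + wshift a b (read a b (a%:Z + b%:Z - 1) (size (E_ u k))) =
    (u k.+2 - 1)%N.
  rewrite read_mod; last by lia.
  have -> : a%:Z + b%:Z - 1 + a%:Z * (size (E_ u k))%:Z =
      (1 + p_ u k) * (a%:Z + b%:Z) + (u k.+2 - 1)%N.
    by move: delta_antepenult; rewrite sE0 /delta; lia.
  by rewrite modzMDl modz_small //; lia.
have Rw : readable a b (wpow (E_ u k.+1) (u k.+2 - 1)) (u k.+2 - 1)%N.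
  apply: readable_wpow => t ht; rewrite wshift_E delta_penult.
  by case: readable_on_last_E => _ R1; apply: R1; apply/andP; lia.
by rewrite -{1}Rw size_wpow -e; apply: suffix_read.
Qed.

End LastLevel.

Theorem proposition2 (a b : nat) (u : nat -> nat) (i : nat) (L1 : int * int) :
  (0 < a)%N -> (a <= b)%N -> coprime a b ->
  (1 <= i)%N ->
  (forall k, (1 <= k <= i.*2)%N -> (0 < u k)%N) ->
  (a%:Q / b%:Q = cfrac u i.*2) ->
  inD a b L1 -> lower_leaning a b L1 -> 0 < L1.1 <= b%:Z ->
  [/\ (L1.1 - 0, L1.2 - 0) = (q_ u i.*2.-1 + 1, p_ u i.*2.-1 - 1),
      (b%:Z - L1.1, a%:Z - L1.2) =
        (((u i.*2)%:Z - 1) * q_ u i.*2.-1 + q_ u i.*2.-2 - 1,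
         ((u i.*2)%:Z - 1) * p_ u i.*2.-1 + p_ u i.*2.-2 + 1),
      prefix (wpow (E_ u i.*2.-2) (u i.*2.-1)) (freeman a b (0, 0) L1)
    & suffix (wpow (E_ u i.*2.-1) (u i.*2 - 1)) (freeman a b L1 (b%:Z, a%:Z))].
Proof.
move=> a0 ab cab; case: i => [//|j] _ hu hab _ hL hX.
have b0 := leq_trans a0 ab.
rewrite doubleS /= in hu hab *.
have [pa qb] := convergent_eq_frac cab b0 hu hab.
rewrite (lower_leaning_eq pa qb hu cab hL hX) /=; split.
- by rewrite !subr0.
- by rewrite -pa -qb p_SS q_SS; congr pair; ring.
- exact: prefix_freeman_lower_leaning.
- exact: suffix_freeman_lower_leaning.
Qed.
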